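(* Let $G$ be a graph on $n\ge 2$ vertices and let $P_4(G)$ be the number of paths of length $4$ in $G$ (subgraphs isomorphic to the path with $4$ edges). For distinct vertices $u,v$ let $d(u,v)$ be the number of vertices adjacent to both $u$ and $v$. Then $$P_4(G)\le \frac12\sum_{u\in V(G)}\sum_{v\in V(G),\,v\ne u} d(u)\,d(v)\,d(u,v),$$ and consequently, if $x_1\ge x_2\ge\cdots\ge x_n$ is the degree sequence of $G$ in non-increasing order, $$P_4(G)\le \sum_{i=1}^{n-1}\sum_{j=i+1}^{n} x_i x_j^2 .$$
   Context: $d(u)$ denotes the degree of vertex $u$ in $G$. *)

(* A simple graph on a finite vertex type T is a
   symmetric irreflexive relation e : rel T. *)
From mathcomp Require Import all_boot all_order all_algebra.
Set Implicit Arguments. Unset Strict Implicit. Unset Printing Implicit Defensive.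

Definition deg (T : finType) (e : rel T) (u : T) : nat := #|[set v | e u v]|.

Definition codeg (T : finType) (e : rel T) (u v : T) : nat :=
  #|[set w | e u w && e v w]|.

(* the i-th edge {f i, f (i+1)} of a vertex labelling f of the path P_4
   (vertices 0..4, edges {i,i+1} for i < 4) *)
Definition p4edge (T : finType) (f : {ffun 'I_5 -> T}) (i : 'I_4) : {set T} :=
  [set f (widen_ord (leqnSn 4) i); f (lift ord0 i)].

Definition is_P4 (T : finType) (e : rel T) (S : {set {set T}}) : bool :=
  [exists f : {ffun 'I_5 -> T},
     [&& injectiveb f,
         [forall i : 'I_4, e (f (widen_ord (leqnSn 4) i)) (f (lift ord0 i))] &
         S == [set p4edge f i | i : 'I_4]]].

Definition P4 (T : finType) (e : rel T) : nat := #|[set S | is_P4 e S]|.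

Definition degseq (T : finType) (e : rel T) : seq nat :=
  sort geq [seq deg e v | v <- enum T].

From mathcomp Require Import all_boot all_order all_algebra zify.
Import Order.TTheory GRing.Theory Num.Theory.

Set Implicit Arguments.
Unset Strict Implicit.
Unset Printing Implicit Defensive.

(* A copy of P_4 in G, with edge set S, is the image of some
   labelling f : {0..4} -> V(G) that is injective and maps consecutive
   numbers to adjacent vertices; reversing f gives a second labelling of
   the same S, so  2 P_4(G) <= #labellings.  A labelling is determined by
   the "frame" (f1, f3, f0, f4, f2): two distinct vertices u = f1, v = f3,
   a neighbour of u, a neighbour of v and a common neighbour of u and v.
   There are exactly  sum_{u <> v} d(u) d(v) d(u,v)  frames, which gives
   the first inequality.  For the second, d(u,v) <= min(d(u), d(v)), so
   each term is at most h(d(u), d(v)) with h(x,y) = x y min(x,y); this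
   bound is symmetric, so reindexing along the non-increasing degree
   sequence turns the sum over ordered pairs u <> v into twice the sum
   over i < j of h(x_i, x_j) = x_i x_j^2.  The file proves the counting
   part first (labellings, then frames), then the summation lemmas, and
   derives the theorem at the end. *)

Section Labellings.
Variables (T : finType) (e : rel T).
Hypothesis e_sym : symmetric e.

Definition p4_labellings : {set {ffun 'I_5 -> T}} :=
  [set f : {ffun 'I_5 -> T} | injectiveb f &&
     [forall i : 'I_4, e (f (widen_ord (leqnSn 4) i)) (f (lift ord0 i))]].

Definition p4_edges (f : {ffun 'I_5 -> T}) : {set {set T}} :=
  [set p4edge f i | i : 'I_4].

Definition rev_labelling (f : {ffun 'I_5 -> T}) : {ffun 'I_5 -> T} :=
  [ffun i => f (rev_ord i)].

(* Reversal swaps the two endpoints of the i-th edge with those of the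
   (3-i)-th edge. *)
Lemma rev_ord_widen (i : 'I_4) :
  rev_ord (widen_ord (leqnSn 4) i) = lift ord0 (rev_ord i).
Proof. by apply: val_inj; rewrite /= /bump /=; have := ltn_ord i; lia. Qed.

Lemma rev_ord_lift (i : 'I_4) :
  rev_ord (lift ord0 i) = widen_ord (leqnSn 4) (rev_ord i).
Proof. by apply: val_inj; rewrite /= /bump /=; have := ltn_ord i; lia. Qed.

Lemma rev_labelling_in (f : {ffun 'I_5 -> T}) :
  f \in p4_labellings -> rev_labelling f \in p4_labellings.
Proof.
rewrite !inE => /andP[/injectiveP f_inj /forallP f_adj]; apply/andP; split.
  by apply/injectiveP => x y; rewrite !ffunE => /f_inj; apply: rev_ord_inj.
by apply/forallP => i; rewrite !ffunE rev_ord_widen rev_ord_lift e_sym.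
Qed.

Lemma rev_labelling_edges (f : {ffun 'I_5 -> T}) :
  p4_edges (rev_labelling f) = p4_edges f.
Proof.
have edge_rev i : p4edge (rev_labelling f) i = p4edge f (rev_ord i).
  by rewrite /p4edge !ffunE rev_ord_widen rev_ord_lift setUC.
apply/setP => X; apply/imsetP/imsetP => -[i _ ->].
  by exists (rev_ord i); rewrite ?edge_rev.
by exists (rev_ord i); rewrite ?edge_rev ?rev_ordK.
Qed.

(* An injective labelling differs from its reversal (already at 0 vs 4). *)
Lemma rev_labelling_neq (f : {ffun 'I_5 -> T}) :
  injectiveb f -> rev_labelling f != f.
Proof.
move/injectiveP => f_inj; apply/eqP => rev_eq.
have := congr1 (fun g : {ffun 'I_5 -> T} => g ord0) rev_eq.
by rewrite /= ffunE => /f_inj /(congr1 val).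
Qed.

(* Every copy of P_4 has at least two labellings: f and its reversal. *)
Lemma twice_P4_le_labellings : (2 * P4 e <= #|p4_labellings|)%N.
Proof.
rewrite -sum1_card (partition_big p4_edges (fun S => is_P4 e S)); last first.
  by move=> f; rewrite inE => /andP[f_inj f_adj]; apply/existsP; exists f;
     rewrite f_inj f_adj eqxx.
rewrite /P4 -sum1_card big_distrr /= (eq_bigl (fun S => is_P4 e S)); last first.
  by move=> S; rewrite inE.
apply: leq_sum => S /existsP[f /and3P[f_inj f_adj /eqP ->]].
have f_in : f \in p4_labellings by rewrite inE f_inj.
rewrite (bigD1 f) /=; last by rewrite f_in eqxx.
rewrite (bigD1 (rev_labelling f)) //=.
by rewrite rev_labelling_in // rev_labelling_edges eqxx rev_labelling_neq.
Qed.

(* Frames ((u, v), ((a, b), c)): u <> v, a ~ u, b ~ v, c ~ u and c ~ v. *)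
Definition p4_frames : {set (T * T) * ((T * T) * T)} :=
  [set t | [&& t.1.1 != t.1.2, e t.1.1 t.2.1.1, e t.1.2 t.2.1.2,
              e t.1.1 t.2.2 & e t.1.2 t.2.2]].

(* For fixed u <> v the frames form a product of three neighbourhood sets. *)
Lemma card_p4_frames :
  \sum_u \sum_(v | v != u) deg e u * deg e v * codeg e u v = #|p4_frames|.
Proof.
transitivity (\sum_u \sum_v \sum_q (((u, v), q) \in p4_frames : nat)).
  apply: eq_bigr => u _; rewrite big_mkcond; apply: eq_bigr => v _.
  case: eqVneq => [->|v_neq_u] /=.
    by rewrite big1 // => q _; rewrite inE eqxx.
  rewrite /deg /codeg -!cardsX -sum1_card big_mkcond.
  apply: eq_bigr => -[[a b] c] _.
  by rewrite !inE /= eq_sym v_neq_u !andbA.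
rewrite pair_bigA /= pair_bigA /= -sum1_card [RHS]big_mkcond /=.
by apply: eq_bigr => -[[u v] q] _; case: (_ \in _).
Qed.

Definition frame_of (f : {ffun 'I_5 -> T}) : (T * T) * ((T * T) * T) :=
  ((f (inord 1), f (inord 3)), ((f (inord 0), f (inord 4)), f (inord 2))).

Lemma labelling_adj (f : {ffun 'I_5 -> T}) (k : nat) :
  f \in p4_labellings -> (k < 4)%N -> e (f (inord k)) (f (inord k.+1)).
Proof.
rewrite inE => /andP[_ /forallP f_adj] lt_k4; have := f_adj (Ordinal lt_k4).
have -> : widen_ord (leqnSn 4) (Ordinal lt_k4) = inord k.
  by apply: val_inj; rewrite /= inordK //; lia.
suff -> : lift ord0 (Ordinal lt_k4) = inord k.+1 by [].
by apply: val_inj; rewrite /= inordK //; lia.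
Qed.

(* Reading off the frame is an injection from labellings into frames. *)
Lemma labellings_le_frames : (#|p4_labellings| <= #|p4_frames|)%N.
Proof.
rewrite -(card_in_imset (f := frame_of)); last first.
  move=> f g _ _ [f1 f3 f0 f4 f2]; apply/ffunP => i.
  have -> : i = inord i by rewrite inord_val.
  by case: i => -[|[|[|[|[|m]]]]].
apply: subset_leq_card; apply/subsetP => _ /imsetP[f f_in ->].
have /injectiveP f_inj : injectiveb f by move: f_in; rewrite inE => /andP[].
have := labelling_adj f_in (isT : (0 < 4)%N).
have := labelling_adj f_in (isT : (1 < 4)%N).
have := labelling_adj f_in (isT : (2 < 4)%N).
have := labelling_adj f_in (isT : (3 < 4)%N).
rewrite inE /= => e34 e23 e12 e01.
rewrite (e_sym (f _) (f (inord 0))) e01 e34 e12 e_sym e23 !andbT.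
by apply/eqP => /f_inj /(congr1 val); rewrite /= !inordK.
Qed.

Lemma twice_P4_le_codeg_sum :
  (2 * P4 e <= \sum_u \sum_(v | v != u) deg e u * deg e v * codeg e u v)%N.
Proof.
rewrite card_p4_frames.
exact: leq_trans twice_P4_le_labellings labellings_le_frames.
Qed.

End Labellings.

Lemma sum_offdiag_sym n (F : 'I_n -> 'I_n -> nat) :
  (forall i j : 'I_n, F i j = F j i) ->
  (\sum_(i < n) \sum_(j < n | j != i) F i j =
   2 * \sum_(i < n) \sum_(j < n | (i < j)%N) F i j)%N.
Proof.
move=> F_sym.
have split_neq (i : 'I_n) : (\sum_(j < n | j != i) F i j =
    \sum_(j < n | (i < j)%N) F i j + \sum_(j < n | (j < i)%N) F i j)%N.
  rewrite (bigID (fun j : 'I_n => (i < j)%N)) /=.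
  by congr (_ + _); apply: eq_bigl => j; rewrite -val_eqE /=; case: ltngtP.
rewrite (eq_bigr _ (fun i _ => split_neq i)) big_split /= mul2n -addnn.
congr (_ + _); rewrite (exchange_big_dep xpredT) //=.
by apply: eq_bigr => i _; apply: eq_bigr => j _; rewrite F_sym.
Qed.

Section SortedValues.
Variables (T : finType) (f : T -> nat).

Let sorted_vals : seq nat := sort geq [seq f v | v <- enum T].

Lemma size_sorted_vals : size sorted_vals = #|T|.
Proof. by rewrite size_sort size_map -cardE. Qed.

Lemma sum_sorted_vals (F : nat -> nat) :
  (\sum_u F (f u) = \sum_(i < #|T|) F (nth 0 sorted_vals i))%N.
Proof.
rewrite -size_sorted_vals -(big_mkord xpredT (fun i => F (nth 0 sorted_vals i))).
rewrite -(big_nth 0 xpredT F) (perm_big _ (permEl (perm_sort _ _))).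
by rewrite big_map big_enum.
Qed.

(* The same for a function of two values over ordered pairs of distinct
   points: subtract the diagonal from the full double sum. *)
Lemma sum_offdiag_sorted_vals (G : nat -> nat -> nat) :
  (\sum_u \sum_(v | v != u) G (f u) (f v) =
   \sum_(i < #|T|) \sum_(j < #|T| | j != i)
      G (nth 0 sorted_vals i) (nth 0 sorted_vals j))%N.
Proof.
set s := sorted_vals.
have diag_split (I : finType) (H : I -> I -> nat) :
    (\sum_u \sum_v H u v = \sum_u \sum_(v | v != u) H u v + \sum_u H u u)%N.
  by rewrite -big_split; apply: eq_bigr => u _; rewrite (bigD1 u) //= addnC.
apply/eqP; rewrite -(eqn_add2r (\sum_u G (f u) (f u))) -diag_split.
rewrite (sum_sorted_vals (fun x => G x x)) -diag_split.
apply/eqP/(eq_trans _ (sum_sorted_vals (fun x => \sum_(j < #|T|) G x (nth 0 s j)))).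
by apply: eq_bigr => u _; apply: (sum_sorted_vals (G (f u))).
Qed.

Lemma sorted_vals_nonincr (i j : nat) :
  (i <= j)%N -> (j < #|T|)%N -> (nth 0 sorted_vals j <= nth 0 sorted_vals i)%N.
Proof.
move=> le_ij lt_jT; have s_size := size_sorted_vals.
have s_sorted : sorted geq sorted_vals by apply/sort_sorted => x y; apply: leq_total.
apply: (sorted_leq_nth (leT := geq)) => //.
- by move=> x y z /= ? ?; apply: leq_trans; eassumption.
- by move=> x /=.
- by rewrite inE s_size (leq_ltn_trans le_ij).
- by rewrite inE s_size.
Qed.

End SortedValues.

Definition deg_bound (x y : nat) : nat := x * y * minn x y.

Lemma codeg_le_min (T : finType) (e : rel T) (u v : T) :
  (codeg e u v <= minn (deg e u) (deg e v))%N.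
Proof.
rewrite leq_min; apply/andP; split; apply: subset_leq_card;
  by apply/subsetP => w; rewrite !inE => /andP[].
Qed.

Lemma codeg_sum_le_degseq (T : finType) (e : rel T) :
  (\sum_u \sum_(v | v != u) deg e u * deg e v * codeg e u v <=
   2 * \sum_(i < #|T|) \sum_(j < #|T| | (i < j)%N)
          (nth 0 (degseq e) i * (nth 0 (degseq e) j) ^ 2))%N.
Proof.
set x := nth 0 (degseq e).
apply: (@leq_trans (\sum_u \sum_(v | v != u) deg_bound (deg e u) (deg e v))).
  by apply: leq_sum => u _; apply: leq_sum => v _; rewrite leq_mul2l codeg_le_min orbT.
rewrite (sum_offdiag_sorted_vals (deg e) deg_bound) -/(degseq e) -/x.
rewrite sum_offdiag_sym; last by move=> i j; rewrite /deg_bound minnC [X in X * _ = _]mulnC.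
rewrite leq_pmul2l //; apply: eq_leq.
apply: eq_bigr => i _; apply: eq_bigr => j lt_ij.
have le_xji : (x j <= x i)%N by apply: sorted_vals_nonincr (ltnW lt_ij) (ltn_ord j).
by rewrite /deg_bound (minn_idPr le_xji) -mulnA.
Qed.

Local Open Scope ring_scope.

Theorem mainTheorem2 (T : finType) (e : rel T)
  (e_sym : symmetric e) (e_irr : irreflexive e) (hn : (2 <= #|T|)%N) :
  ((P4 e)%:R <= (1 / 2 : rat) *
      (\sum_(u : T) \sum_(v : T | v != u)
          (deg e u * deg e v * codeg e u v)%:R))
  /\
  (P4 e <= \sum_(i < #|T|) \sum_(j < #|T| | (i < j)%N)
             (nth 0 (degseq e) i * (nth 0 (degseq e) j) ^ 2))%N.
Proof.
have twice_le := twice_P4_le_codeg_sum e_sym.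
split.
  rewrite -(eq_bigr _ (fun u _ => natr_sum _ _ _ _)) -natr_sum.
  rewrite mul1r ler_pdivlMl // -natrM ler_nat.
  exact: twice_le.
rewrite -(leq_pmul2l (isT : (0 < 2)%N)).
exact: leq_trans twice_le (codeg_sum_le_degseq e).
Qed.
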